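(* Consider the Normal Partizan Domination game on the complete bipartite graph $K_{s,t}$ with parts $S$ and $T$, $|S|=s\geq 2$, $|T|=t\geq 2$, each vertex colored $A$, $B$ or $C$. If every vertex of $S\cup T$ has color $A$ (resp. $B$), the value is $\max\{s,t\}$ (resp. $-\max\{s,t\}$). If each of $S$ and $T$ contains (i) at least one vertex of color $C$ or (ii) at least one vertex of color $A$ and at least one vertex of color $B$, then the value is $0$. If every vertex of $S$ has color $A$ (resp. $B$) and every vertex of $T$ has color $B$ (resp. $A$), then the value is $0$.
   Context: Normal Partizan Domination game: a finite graph $G$ has each vertex colored $A$, $B$ or $C$. Alice and Bob alternately select a vertex; Alice may only select vertices colored $A$ or $C$, Bob only vertices colored $B$ or $C$. A vertex $u$ dominates $v$ if $u=v$ or $uv$ is an edge. A vertex may be selected only if it is playable, i.e. it dominates at least one vertex not dominated by the previously selected vertices; the game ends when the selected vertices form a dominating set. Under normal play the player unable to move loses. The game is regarded as a partizan combinatorial game with Alice as Left and Bob as Right, and its value is its value in Conway's combinatorial game theory ($\{X\mid Y\}$ has Left options $X$ and Right options $Y$; $G=H$ iff $G+(-H)$ is a second-player win; integers $n$ are the usual integer games, $0=\{\mid\}$). *)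

From mathcomp Require Import all_boot.
Set Implicit Arguments. Unset Strict Implicit. Unset Printing Implicit Defensive.

Inductive game : Type := Game : seq game -> seq game -> game.

Definition lopts (G : game) := let: Game L _ := G in L.
Definition ropts (G : game) := let: Game _ R := G in R.

(** outcome G = (Left moving first wins, Right moving first wins),
    under normal play (player unable to move loses). *)
Fixpoint outcome (G : game) : bool * bool :=
  let: Game L R := G in
  ((fix exL (l : seq game) : bool :=
      if l is g :: l' then ~~ (outcome g).2 || exL l' else false) L,
   (fix exR (l : seq game) : bool :=
      if l is g :: l' then ~~ (outcome g).1 || exR l' else false) R).

Definition second_player_win (G : game) : bool :=
  ~~ (outcome G).1 && ~~ (outcome G).2.

Fixpoint gneg (G : game) : game :=
  let: Game L R := G in Game (map gneg R) (map gneg L).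

Fixpoint gadd (G : game) : game -> game :=
  fix addG (H : game) : game :=
    let: Game GL GR := G in
    let: Game HL HR := H in
    Game ([seq gadd g H | g <- GL] ++ [seq addG h | h <- HL])
         ([seq gadd g H | g <- GR] ++ [seq addG h | h <- HR]).

Definition game_eq (G H : game) : Prop := second_player_win (gadd G (gneg H)).

Fixpoint nat_game (n : nat) : game :=
  if n is m.+1 then Game [:: nat_game m] [::] else Game [::] [::].

Inductive color := CA | CB | CC.

Definition alice_may (c : color) : bool := if c is CB then false else true.
Definition bob_may (c : color) : bool := if c is CA then false else true.

Section Domination.
Variables (V : finType) (e : rel V) (col : V -> color).

Definition dominates (u v : V) : bool := (u == v) || e u v.

(** v is playable when X is the set of previously selected vertices *)
Definition playable (X : {set V}) (v : V) : bool :=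
  [exists u, dominates v u && ~~ [exists x in X, dominates x u]].

(** Game tree from position X, with fuel n (each move strictly enlarges the
    dominated set, so fuel #|V| is enough to build the whole tree). *)
Fixpoint dom_game_from (n : nat) (X : {set V}) : game :=
  if n is m.+1 then
    Game [seq dom_game_from m (v |: X) | v <- enum V & alice_may (col v) && playable X v]
         [seq dom_game_from m (v |: X) | v <- enum V & bob_may (col v) && playable X v]
  else Game [::] [::].

Definition dom_game : game := dom_game_from #|V| set0.
End Domination.

(** Complete bipartite graph K_{s,t}: parts S = inl-vertices, T = inr-vertices. *)
Definition Kst_vertex (s t : nat) : finType := ('I_s + 'I_t)%type.
Definition Kst_edge (s t : nat) : rel (Kst_vertex s t) :=
  fun x y => match x, y with
             | inl _, inr _ | inr _, inl _ => true
             | _, _ => false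
             end.

From mathcomp Require Import all_boot zify.
Set Implicit Arguments. Unset Strict Implicit. Unset Printing Implicit Defensive.

(* A game in which Right never has a move equals the integer counting the
   longest run of Left moves.  When every vertex is A, Bob never moves, and in
   K_{s,t} Alice can make exactly max(s,t) moves: after a first move in S only
   the s-1 other vertices of S are undominated, every later move dominates a
   new vertex, and playing through S one vertex at a time attains s.  The
   all-B game is the negative of the all-A game.  In the remaining cases,
   whichever vertex the first player selects, the opponent can answer on the
   other side; two adjacent vertices dominate K_{s,t}, so the first player is
   left without a move, both players lose moving first, and the game is 0. *)

Fixpoint game_all (P : game -> Prop) (l : seq game) : Prop :=
  if l is g :: l' then P g /\ game_all P l' else True.

Fixpoint game_nested_ind (P : game -> Prop)
    (IH : forall L R, game_all P L -> game_all P R -> P (Game L R)) (G : game) :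
    P G :=
  let fix all_opts (l : seq game) : game_all P l :=
    if l is g :: l' return game_all P l then conj (game_nested_ind IH g) (all_opts l')
    else I in
  let: Game L R := G in IH L R (all_opts L) (all_opts R).

Lemma game_all_impl (P Q : game -> Prop) l :
  (forall g, P g -> Q g) -> game_all P l -> game_all Q l.
Proof. by move=> PQ; elim: l => //= g l IH [/PQ ? /IH ?]. Qed.

Lemma game_all_mp (p : pred game) (Q : game -> Prop) l :
  game_all (fun g => p g -> Q g) l -> all p l -> game_all Q l.
Proof. by elim: l => //= g l IH [pQ /IH allQ] /andP [/pQ ? /allQ ?]. Qed.

Lemma game_all_eq_has (a b : pred game) l :
  game_all (fun g => a g = b g) l -> has a l = has b l.
Proof. by elim: l => //= g l IH [-> /IH ->]. Qed.

Lemma game_all_eq_map T (f f' : game -> T) l :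
  game_all (fun g => f g = f' g) l -> map f l = map f' l.
Proof. by elim: l => //= g l IH [-> /IH ->]. Qed.

Lemma outcomeE L R : outcome (Game L R) =
  (has (fun g => ~~ (outcome g).2) L, has (fun g => ~~ (outcome g).1) R).
Proof. by []. Qed.

Lemma gaddE GL GR HL HR : gadd (Game GL GR) (Game HL HR) =
  Game (map (gadd^~ (Game HL HR)) GL ++ map (gadd (Game GL GR)) HL)
       (map (gadd^~ (Game HL HR)) GR ++ map (gadd (Game GL GR)) HR).
Proof. by []. Qed.

Lemma gnegE L R : gneg (Game L R) = Game (map gneg R) (map gneg L).
Proof. by []. Qed.

Lemma outcome_add0 G : outcome (gadd G (nat_game 0)) = outcome G.
Proof.
elim/game_nested_ind: G => L R IHL IHR.
rewrite gaddE !cats0 !outcomeE !has_map.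
by congr pair; apply: game_all_eq_has;
  [apply: game_all_impl IHL | apply: game_all_impl IHR] => g /= ->.
Qed.

Lemma outcome_neg G : outcome (gneg G) = ((outcome G).2, (outcome G).1).
Proof.
elim/game_nested_ind: G => L R IHL IHR.
rewrite gnegE !outcomeE !has_map.
by congr pair; apply: game_all_eq_has;
  [apply: game_all_impl IHR | apply: game_all_impl IHL] => g /= ->.
Qed.

Lemma gneg_add G H : gneg (gadd G H) = gadd (gneg G) (gneg H).
Proof.
elim/game_nested_ind: G H => GL GR IHGL IHGR.
elim/game_nested_ind => HL HR IHHL IHHR.
rewrite gaddE !gnegE gaddE !map_cat -!map_comp.
by congr Game; congr cat; apply: game_all_eq_map;
  [ apply: game_all_impl IHGR | apply: game_all_impl IHHR
  | apply: game_all_impl IHGL | apply: game_all_impl IHHL ] => g /= ->.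
Qed.

Lemma game_eq0 G : game_eq G (nat_game 0) <-> second_player_win G.
Proof. by rewrite /game_eq /second_player_win outcome_add0. Qed.

Lemma game_eq_neg G H : game_eq G H -> game_eq (gneg G) (gneg H).
Proof. by rewrite /game_eq /second_player_win -gneg_add outcome_neg andbC. Qed.

Fixpoint left_only (G : game) : bool :=
  let: Game L R := G in nilp R && all left_only L.

Fixpoint left_height (G : game) : nat :=
  let: Game L _ := G in foldr (fun g m => maxn (left_height g).+1 m) 0 L.

Lemma left_height_gt n L R :
  (n < left_height (Game L R)) = has (fun g => n < (left_height g).+1) L.
Proof. by elim: L => //= g L <-; rewrite leq_max. Qed.

Lemma left_height_le n L R :
  (left_height (Game L R) <= n) = all (fun g => (left_height g).+1 <= n) L.
Proof. by elim: L => //= g L <-; rewrite geq_max. Qed.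

Lemma left_only_outcome_sub_nat G : left_only G -> forall n,
  outcome (gadd G (gneg (nat_game n))) = (n < left_height G, left_height G < n).
Proof.
elim/game_nested_ind: G => L R IHL _ /andP [/nilP -> /(game_all_mp IHL) IH].
elim=> [|n IHn]; rewrite gaddE cats0 outcomeE left_height_gt has_map /=.
  by congr pair; apply: game_all_eq_has; apply: game_all_impl IH => g /(_ 0) /= ->.
congr pair; last by rewrite orbF IHn -leqNgt ltnS.
by apply: game_all_eq_has; apply: game_all_impl IH => g /(_ n.+1) /= ->; rewrite -leqNgt.
Qed.

Lemma left_only_eq_nat G : left_only G -> game_eq G (nat_game (left_height G)).
Proof.
by move=> lG; rewrite /game_eq /second_player_win left_only_outcome_sub_nat // ltnn.
Qed.

Section DominationGame.
Variables (V : finType) (e : rel V) (col : V -> color).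

Definition undominated (X : {set V}) : {set V} :=
  [set u | ~~ [exists x in X, dominates e x u]].

Lemma playableE X v : playable e X v = [exists u, dominates e v u && (u \in undominated X)].
Proof. by apply: eq_existsb => u; rewrite inE. Qed.

Lemma in_undominatedU1 v X u :
  (u \in undominated (v |: X)) = ~~ dominates e v u && (u \in undominated X).
Proof.
rewrite !inE -negb_or; congr negb; apply/existsP/orP.
  case=> x /andP [/setU1P [->|xX] xu]; first by left.
  by right; apply/existsP; exists x; rewrite xX.
case=> [vu|/existsP [x /andP [xX xu]]]; first by exists v; rewrite setU11 vu.
by exists x; rewrite setU1r.
Qed.

Lemma undominated_set1 v : undominated [set v] = [set u | ~~ dominates e v u].
Proof.
apply/setP => u; rewrite -(setU0 [set v]) in_undominatedU1 !inE.
by case: existsP => [[x /andP []]|]; rewrite ?inE ?andbT.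
Qed.

Lemma dom_game_fromS k X : dom_game_from e col k.+1 X =
  Game [seq dom_game_from e col k (v |: X) | v <- enum V & alice_may (col v) && playable e X v]
       [seq dom_game_from e col k (v |: X) | v <- enum V & bob_may (col v) && playable e X v].
Proof. by []. Qed.

Lemma filter_playable_undominated0 (p : pred V) X : undominated X = set0 ->
  [seq v <- enum V | p v && playable e X v] = [::].
Proof.
move=> X_dom; rewrite (@eq_filter _ _ pred0) ?filter_pred0 // => v.
by rewrite playableE X_dom; apply/andP => -[_ /existsP [u]]; rewrite inE andbF.
Qed.

Lemma dom_game_from_undominated0 k X :
  undominated X = set0 -> dom_game_from e col k X = nat_game 0.
Proof.
by case: k => // k X_dom; rewrite dom_game_fromS !filter_playable_undominated0.
Qed.

Lemma left_only_dom_game_from k X :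
  (forall v, ~~ bob_may (col v)) -> left_only (dom_game_from e col k X).
Proof.
move=> noB; elim: k X => // k IH X; rewrite dom_game_fromS /=.
rewrite all_map; apply/andP; split; last by apply/allP => v _; apply: IH.
by rewrite (@eq_filter _ _ pred0) ?filter_pred0 // => v; rewrite (negbTE (noB v)).
Qed.

Lemma left_height_dom_game_from_le k X :
  left_height (dom_game_from e col k X) <= #|undominated X|.
Proof.
elim: k X => // k IH X.
rewrite dom_game_fromS left_height_le all_map all_filter; apply/allP => v _.
apply/implyP => /andP [_]; rewrite playableE => /existsP [u /andP [vu u_undom]].
apply: leq_ltn_trans (IH _) _; apply: proper_card; apply/properP; split.
  by apply/subsetP => w; rewrite in_undominatedU1 => /andP [].
by exists u; rewrite // in_undominatedU1 vu.
Qed.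

Lemma left_height_dom_game_from_ge (P : {set V}) :
  {in P &, forall u w, u != w -> ~~ e u w} -> {in P, forall v, alice_may (col v)} ->
  forall k (X : {set V}), X \subset P ->
  minn k (#|P| - #|X|) <= left_height (dom_game_from e col k X).
Proof.
move=> P_indep P_alice; elim=> [|k IH] X XP; first by rewrite min0n.
have [|ltXP] := leqP #|P| #|X|; first by rewrite -subn_eq0 => /eqP ->; rewrite minn0.
have /set0Pn [v /setDP [vP vX]] : P :\: X != set0.
  by apply: contraTneq ltXP => /eqP; rewrite setD_eq0 => /subset_leq_card; rewrite -leqNgt.
have v_playable : playable e X v.
  rewrite playableE; apply/existsP; exists v; rewrite /dominates eqxx /= inE.
  apply/existsP => -[x /andP [xX]]; rewrite /dominates.
  have xv : x != v by apply: contraNneq vX => <-.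
  by rewrite (negbTE xv) (negbTE (P_indep _ _ (subsetP XP _ xX) vP xv)).
have -> : #|P| - #|X| = (#|P| - #|v |: X|).+1 by rewrite cardsU1 vX /=; lia.
rewrite minnSS dom_game_fromS left_height_gt has_map; apply/hasP; exists v.
  by rewrite mem_filter v_playable P_alice // mem_enum.
by rewrite /= ltnS IH // subUset sub1set vP XP.
Qed.

Lemma left_height_dom_game_ge (P : {set V}) :
  {in P &, forall u w, u != w -> ~~ e u w} -> {in P, forall v, alice_may (col v)} ->
  #|P| <= left_height (dom_game e col).
Proof.
move=> P_indep P_alice.
have := left_height_dom_game_from_ge P_indep P_alice #|V| (sub0set P).
by rewrite cards0 subn0 (minn_idPr (max_card _)).
Qed.

Lemma second_player_win_dom_game_from k :
  (forall v, alice_may (col v) -> exists2 w, bob_may (col w) && playable e [set v] w &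
     undominated (w |: [set v]) = set0) ->
  (forall v, bob_may (col v) -> exists2 w, alice_may (col w) && playable e [set v] w &
     undominated (w |: [set v]) = set0) ->
  second_player_win (dom_game_from e col k.+2 set0).
Proof.
move=> answerA answerB; rewrite /second_player_win dom_game_fromS outcomeE !has_map.
apply/andP; split; apply/hasPn => v; rewrite mem_filter => /andP [/andP [v_col _] _];
  apply/negPn; rewrite dom_game_fromS outcomeE ?[_.1]/= ?[_.2]/= has_map setU0.
- have [w w_reply /(dom_game_from_undominated0 k) w_dom] := answerA v v_col.
  by apply/hasP; exists w; [rewrite mem_filter w_reply mem_enum | rewrite /= w_dom].
- have [w w_reply /(dom_game_from_undominated0 k) w_dom] := answerB v v_col.
  by apply/hasP; exists w; [rewrite mem_filter w_reply mem_enum | rewrite /= w_dom].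
Qed.

End DominationGame.

Definition swap_color (c : color) : color :=
  match c with CA => CB | CB => CA | CC => CC end.

Lemma dom_game_from_swap (V : finType) (e : rel V) (col col' : V -> color) k X :
  col' =1 swap_color \o col -> dom_game_from e col' k X = gneg (dom_game_from e col k X).
Proof.
move=> col'E; elim: k X => // k IH X.
rewrite !dom_game_fromS gnegE -!map_comp.
by congr Game; rewrite (eq_map (fun v => IH (v |: X))); congr (map _ _);
  apply: eq_filter => v; rewrite col'E /=; case: (col v).
Qed.

Section CompleteBipartite.
Variables s t : nat.
Local Notation V := (Kst_vertex s t).
Local Notation e := (@Kst_edge s t).

Lemma card_Kst_vertex : #|V| = s + t.
Proof. by rewrite card_sum !card_ord. Qed.

Lemma undominated_Kst_inl i : undominated e [set inl i] = inl @: [set~ i].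
Proof.
apply/setP => -[k|k]; rewrite undominated_set1 !inE /dominates /= ?orbF.
  by rewrite (mem_imset _ _ (@inl_inj _ _)) !inE eq_sym.
by apply/esym/imsetP => -[].
Qed.

Lemma undominated_Kst_inr j : undominated e [set inr j] = inr @: [set~ j].
Proof.
apply/setP => -[k|k]; rewrite undominated_set1 !inE /dominates /= ?orbF.
  by apply/esym/imsetP => -[].
by rewrite (mem_imset _ _ (@inr_inj _ _)) !inE eq_sym.
Qed.

Lemma undominated_Kst_edge v w : e v w -> undominated e (w |: [set v]) = set0.
Proof.
move=> vw; apply/setP => u; rewrite in_undominatedU1 undominated_set1 !inE /dominates.
by case: v w u vw => [?|?] [?|?] [?|?]; rewrite //= ?orbT ?andbF.
Qed.

Lemma playable_Kst_edge v w : 2 <= s -> 2 <= t -> e v w -> playable e [set v] w.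
Proof.
move=> s_ge2 t_ge2; rewrite playableE.
case: v w => [i|j] [i'|j'] // _.
  have /set0Pn [k k_ne] : [set~ i] != set0 by rewrite -card_gt0 cardsC1 card_ord; lia.
  by apply/existsP; exists (inl k); rewrite undominated_Kst_inl mem_imset //; apply: inl_inj.
have /set0Pn [k k_ne] : [set~ j] != set0 by rewrite -card_gt0 cardsC1 card_ord; lia.
by apply/existsP; exists (inr k); rewrite undominated_Kst_inr mem_imset //; apply: inr_inj.
Qed.

Lemma left_height_dom_game_Kst_le col : left_height (dom_game e col) <= maxn s t.
Proof.
rewrite /dom_game; case: #|V| => // k.
rewrite dom_game_fromS left_height_le all_map; apply/allP => v _ /=.
rewrite setU0; apply: leq_ltn_trans (left_height_dom_game_from_le _ _ _ _) _.
case: v => [i|j].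
  rewrite undominated_Kst_inl card_imset ?cardsC1 ?card_ord; last exact: inl_inj.
  by have := ltn_ord i; lia.
rewrite undominated_Kst_inr card_imset ?cardsC1 ?card_ord; last exact: inr_inj.
by have := ltn_ord j; lia.
Qed.

Lemma left_height_dom_game_Kst col :
  (forall v, alice_may (col v)) -> left_height (dom_game e col) = maxn s t.
Proof.
move=> col_alice; apply/eqP; rewrite eqn_leq left_height_dom_game_Kst_le /= geq_max.
apply/andP; split.
  have := @left_height_dom_game_ge _ e col (inl @: [set: 'I_s]).
  rewrite card_imset ?cardsT ?card_ord; last exact: inl_inj.
  by apply=> [? ? /imsetP [? _ ->] /imsetP [? _ ->]|v _].
have := @left_height_dom_game_ge _ e col (inr @: [set: 'I_t]).
rewrite card_imset ?cardsT ?card_ord; last exact: inr_inj.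
by apply=> [? ? /imsetP [? _ ->] /imsetP [? _ ->]|v _].
Qed.

Lemma dom_game_Kst_all_A col :
  (forall v, col v = CA) -> game_eq (dom_game e col) (nat_game (maxn s t)).
Proof.
move=> col_A; rewrite -(left_height_dom_game_Kst (col := col)) => [|v]; last by rewrite col_A.
by apply/left_only_eq_nat/left_only_dom_game_from => v; rewrite col_A.
Qed.

Lemma dom_game_Kst_eq0 col : 2 <= s -> 2 <= t ->
  (forall v, alice_may (col v) -> exists2 w, e v w & bob_may (col w)) ->
  (forall v, bob_may (col v) -> exists2 w, e v w & alice_may (col w)) ->
  game_eq (dom_game e col) (nat_game 0).
Proof.
move=> s_ge2 t_ge2 answerA answerB; apply/game_eq0.
rewrite /dom_game card_Kst_vertex (_ : s + t = (s + t - 2).+2); last by lia.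
apply: second_player_win_dom_game_from => v.
  move=> /answerA [w vw w_col]; exists w; last exact: undominated_Kst_edge.
  by rewrite w_col playable_Kst_edge.
move=> /answerB [w vw w_col]; exists w; last exact: undominated_Kst_edge.
by rewrite w_col playable_Kst_edge.
Qed.

End CompleteBipartite.

Lemma exists_alice_bob_may (I : Type) (c : I -> color) :
  (exists i, c i = CC) \/ ((exists i, c i = CA) /\ (exists i, c i = CB)) ->
  (exists i, alice_may (c i)) /\ (exists i, bob_may (c i)).
Proof.
by case=> [[i ci] | [[i ci] [i' ci']]]; split;
  [exists i | exists i | exists i | exists i']; rewrite ?ci ?ci'.
Qed.

Unset Implicit Arguments.

Theorem theorem4 (s t : nat) (hs : 2 <= s) (ht : 2 <= t)
    (col : Kst_vertex s t -> color) :
  let G := dom_game (Kst_edge (s:=s) (t:=t)) col in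
  (* all A / all B *)
  ((forall v, col v = CA) -> game_eq G (nat_game (maxn s t))) /\
  ((forall v, col v = CB) -> game_eq G (gneg (nat_game (maxn s t)))) /\
  (* each side contains a C, or both an A and a B *)
  (((exists i : 'I_s, col (inl i) = CC) \/
      ((exists i : 'I_s, col (inl i) = CA) /\ (exists i : 'I_s, col (inl i) = CB))) ->
   ((exists j : 'I_t, col (inr j) = CC) \/
      ((exists j : 'I_t, col (inr j) = CA) /\ (exists j : 'I_t, col (inr j) = CB))) ->
   game_eq G (nat_game 0)) /\
  (* S all A and T all B, or vice versa *)
  ((forall i : 'I_s, col (inl i) = CA) -> (forall j : 'I_t, col (inr j) = CB) ->
   game_eq G (nat_game 0)) /\
  ((forall i : 'I_s, col (inl i) = CB) -> (forall j : 'I_t, col (inr j) = CA) ->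
   game_eq G (nat_game 0)).
Proof.
move=> G; have i0 : 'I_s := Ordinal (leq_trans (isT : 0 < 2) hs).
have j0 : 'I_t := Ordinal (leq_trans (isT : 0 < 2) ht).
split; first exact: dom_game_Kst_all_A.
split.
  move=> col_B; rewrite /G /dom_game (@dom_game_from_swap _ _ (fun=> CA)) => [|v].
    exact/game_eq_neg/dom_game_Kst_all_A.
  by rewrite col_B.
split.
  move=> /exists_alice_bob_may [[iA iA_col] [iB iB_col]].
  move=> /exists_alice_bob_may [[jA jA_col] [jB jB_col]].
  by apply: dom_game_Kst_eq0 => // -[i|j] _;
    [exists (inr jB) | exists (inl iB) | exists (inr jA) | exists (inl iA)].
split=> col_S col_T; apply: dom_game_Kst_eq0 => // -[i|j]; rewrite ?col_S ?col_T // => _;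
  by [exists (inr j0); rewrite /= ?col_T | exists (inl i0); rewrite /= ?col_S].
Qed.
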